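(* Let $p>1$, $\alpha\in\mathbb{R}$, and for $\bar w\in\mathbb{R}$, $s$ large, define $$N(\bar w,s)=h(s)|\bar w+1|^{p-1}(\bar w+1)\frac{\ln^\alpha(\psi_1^2(\bar w+1)^2+2)}{\ln^\alpha(\psi_1^2+2)}-h(s)(\bar w+1)-\bar w,$$ with $\psi_1=\psi_1(s)$. Then $$N(\bar w,s)=\frac{p\bar w^2}{2}+O\!\left(\frac{|\bar w|\ln s}{s^2}\right)+O\!\left(\frac{|\bar w|^2}{s}\right)+O(|\bar w|^3)\quad\text{as }(\bar w,s)\to(0,+\infty).$$
   Context: For $T>0$ let $\psi$ be the unique positive solution of $\psi'=\psi^p\ln^\alpha(\psi^2+2)$ with $\psi(t)\to+\infty$ as $t\to T$; set $\psi_1(s)=\psi(T-e^{-s})$ and $h(s)=e^{-s}\psi_1^{p-1}(s)\ln^\alpha(\psi_1^2(s)+2)$. *)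

From Stdlib Require Import Reals.
From Coquelicot Require Import Coquelicot.
Open Scope R_scope.

Definition rpow (x y : R) : R := Rpower x y.

Definition lnpow (alpha x : R) : R := rpow (ln (x ^ 2 + 2)) alpha.

Definition is_blowup_sol (p alpha T : R) (psi : R -> R) : Prop :=
  (forall t, t < T -> 0 < psi t) /\
  (forall t, t < T -> is_derive psi t (rpow (psi t) p * lnpow alpha (psi t))) /\
  filterlim psi (at_left T) (Rbar_locally p_infty).

Definition psi1 (psi : R -> R) (T s : R) : R := psi (T - exp (- s)).

Definition hfun (p alpha T : R) (psi : R -> R) (s : R) : R :=
  exp (- s) * rpow (psi1 psi T s) (p - 1) * lnpow alpha (psi1 psi T s).

Definition Nfun (p alpha T : R) (psi : R -> R) (w s : R) : R :=
  let P := psi1 psi T s in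
  let h := hfun p alpha T psi s in
  h * rpow (Rabs (w + 1)) (p - 1) * (w + 1)
    * (rpow (ln (P ^ 2 * (w + 1) ^ 2 + 2)) alpha / lnpow alpha P)
  - h * (w + 1) - w.

(* Write x = psi t and ell = ln (x^2 + 2). The functions
     Phi_k(x) = x^(1-p) ell^(-a) (1 + k / ell^2) / q(x),   q = p - 1 + 2 a x^2 / ((x^2 + 2) ell),
   are barriers for the remaining time: for k = K and k = -K with K large enough,
   t |-> Phi_k(psi t) + t is monotone along the ODE and tends to T, so that
   Phi_(-K)(x) <= T - t <= Phi_K(x). At t = T - e^(-s) this gives h(s) q(x) = 1 + O(1/ell^2)
   and s = O(ell). Expanding (1+w)^p and ln^a(x^2 (w+1)^2 + 2) / ln^a(x^2 + 2) to second order
   then gives N - p w^2/2 = (h q - 1) w + O(w^2/ell + |w|^3), and 1/ell = O(1/s). *)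

From Stdlib Require Import Reals Lra Psatz.
From Coquelicot Require Import Coquelicot.
Open Scope R_scope.

Lemma is_derive_continuity_pt (f : R -> R) x l : is_derive f x l -> continuity_pt f x.
Proof.
  intros Hf. apply continuity_pt_filterlim.
  apply (ex_derive_continuous (K := R_AbsRing) (V := R_NormedModule)).
  now exists l.
Qed.

Lemma exp_le_compat x y : x <= y -> exp x <= exp y.
Proof.
  intros [Hlt | ->]; [now left; apply exp_increasing | apply Rle_refl].
Qed.

Lemma Rabs_mult_le x y X Y : Rabs x <= X -> Rabs y <= Y -> Rabs (x * y) <= X * Y.
Proof.
  intros Hx Hy. rewrite Rabs_mult.
  apply Rmult_le_compat; auto using Rabs_pos.
Qed.

Lemma Rabs_le_of_derive_bound (f f' : R -> R) (r B : R) (k : nat) :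
  0 <= B -> f 0 = 0 ->
  (forall c, Rabs c <= r -> is_derive f c (f' c)) ->
  (forall c, Rabs c <= r -> Rabs (f' c) <= B * Rabs c ^ k) ->
  forall y, Rabs y <= r -> Rabs (f y) <= B * Rabs y ^ S k.
Proof.
  intros HB Hf0 Hd Hb y Hy.
  assert (Hseg : forall c, Rmin 0 y <= c <= Rmax 0 y -> Rabs c <= Rabs y).
  { unfold Rmin, Rmax; destruct (Rle_dec 0 y); intros c Hc; apply Rabs_le; split_Rabs; lra. }
  destruct (MVT_gen f 0 y f') as [c [Hc Hmvt]].
  - intros c Hc. apply Hd. assert (Rabs c <= Rabs y) by (apply Hseg; lra). lra.
  - intros c Hc. apply (is_derive_continuity_pt _ _ (f' c)), Hd.
    specialize (Hseg c Hc). lra.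
  - rewrite Hf0, !Rminus_0_r in Hmvt. rewrite Hmvt, Rabs_mult. simpl.
    specialize (Hseg c Hc).
    assert (Hf' : Rabs (f' c) <= B * Rabs c ^ k) by (apply Hb; lra).
    assert (Hck : Rabs c ^ k <= Rabs y ^ k) by (apply pow_incr; split; [apply Rabs_pos | lra]).
    assert (0 <= B * Rabs y) by (apply Rmult_le_pos; [lra | apply Rabs_pos]).
    pose proof (Rabs_pos y). nra.
Qed.

Lemma ln_1p_bound y : Rabs y <= 1/2 -> Rabs (ln (1 + y)) <= 2 * Rabs y.
Proof.
  intros Hy. replace (2 * Rabs y) with (2 * Rabs y ^ 1) by ring.
  apply (Rabs_le_of_derive_bound (fun y => ln (1 + y)) (fun c => / (1 + c)) (1/2)); auto; try lra.
  - now rewrite Rplus_0_r, ln_1.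
  - intros c Hc. auto_derive; [split_Rabs; lra | field; split_Rabs; lra].
  - intros c Hc. rewrite pow_O, Rmult_1_r, Rabs_inv, Rabs_pos_eq by (split_Rabs; lra).
    replace 2 with (/ (1/2)) by field. apply Rinv_le_contravar; split_Rabs; lra.
Qed.

Lemma ln_1p_taylor1 y : Rabs y <= 1/2 -> Rabs (ln (1 + y) - y) <= 2 * Rabs y ^ 2.
Proof.
  intros Hy.
  apply (Rabs_le_of_derive_bound (fun y => ln (1 + y) - y) (fun c => / (1 + c) - 1) (1/2)); auto; try lra.
  - rewrite Rplus_0_r, ln_1; ring.
  - intros c Hc. auto_derive; [split_Rabs; lra | field; split_Rabs; lra].
  - intros c Hc. rewrite pow_1.
    replace (/ (1 + c) - 1) with (- c / (1 + c)) by (field; split_Rabs; lra).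
    unfold Rdiv. rewrite Rabs_mult, Rabs_Ropp, Rabs_inv, (Rabs_pos_eq (1 + c)) by (split_Rabs; lra).
    rewrite Rmult_comm. apply Rmult_le_compat_r; [apply Rabs_pos |].
    replace 2 with (/ (1/2)) by field. apply Rinv_le_contravar; split_Rabs; lra.
Qed.

Lemma is_derive_Rpower_1p g y : -1 < y ->
  is_derive (fun y => Rpower (1 + y) g) y (g * Rpower (1 + y) (g - 1)).
Proof.
  intros Hy. unfold Rpower. auto_derive; [lra |].
  replace ((g - 1) * ln (1 + y)) with (g * ln (1 + y) + - ln (1 + y)) by ring.
  rewrite exp_plus, exp_Ropp, exp_ln by lra. field. lra.
Qed.

Lemma Rpower_1p_le g y : Rabs y <= 1/2 -> Rpower (1 + y) g <= exp (Rabs g).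
Proof.
  intros Hy. apply exp_le_compat.
  pose proof (ln_1p_bound y Hy) as Hln.
  apply Rle_trans with (Rabs (g * ln (1 + y))); [apply Rle_abs |].
  rewrite Rabs_mult. pose proof (Rabs_pos g). nra.
Qed.

(* The derivative of [(1+y)^g] is [g (1+y)^(g-1)], so each Taylor estimate for the
   exponent [g] follows from the previous one for the exponent [g - 1]. *)
Lemma Rpower_1p_taylor_step g (Pg Pg1 : R -> R) B k :
  0 <= B -> Pg 0 = 1 -> (forall c, is_derive Pg c (g * Pg1 c)) ->
  (forall c, Rabs c <= 1/2 -> Rabs (Rpower (1 + c) (g - 1) - Pg1 c) <= B * Rabs c ^ k) ->
  forall y, Rabs y <= 1/2 -> Rabs (Rpower (1 + y) g - Pg y) <= Rabs g * B * Rabs y ^ S k.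
Proof.
  intros HB HP0 HdP Hprev.
  apply (Rabs_le_of_derive_bound _ (fun c => g * Rpower (1 + c) (g - 1) - g * Pg1 c)).
  - apply Rmult_le_pos; [apply Rabs_pos | exact HB].
  - unfold Rpower. rewrite HP0, Rplus_0_r, ln_1, Rmult_0_r, exp_0. ring.
  - intros c Hc. apply (is_derive_minus (fun y => Rpower (1 + y) g));
      [apply is_derive_Rpower_1p; split_Rabs; lra | apply HdP].
  - intros c Hc. rewrite <- Rmult_minus_distr_l, Rabs_mult, Rmult_assoc.
    apply Rmult_le_compat_l; [apply Rabs_pos | now apply Hprev].
Qed.

Lemma Rpower_1p_taylor1 g y : Rabs y <= 1/2 ->
  Rabs (Rpower (1 + y) g - 1) <= Rabs g * exp (Rabs (g - 1)) * Rabs y.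
Proof.
  intros Hy. rewrite <- (pow_1 (Rabs y)).
  apply (Rpower_1p_taylor_step g (fun _ => 1) (fun _ => 0)); auto.
  - left; apply exp_pos.
  - intros c. auto_derive; auto; ring.
  - intros c Hc. rewrite Rminus_0_r, pow_O, Rmult_1_r.
    rewrite Rabs_pos_eq by (left; apply exp_pos). now apply Rpower_1p_le.
Qed.

Lemma Rpower_1p_taylor2 g y : Rabs y <= 1/2 ->
  Rabs (Rpower (1 + y) g - 1 - g * y)
  <= Rabs g * Rabs (g - 1) * exp (Rabs (g - 2)) * Rabs y ^ 2.
Proof.
  intros Hy.
  replace (Rpower (1 + y) g - 1 - g * y) with (Rpower (1 + y) g - (1 + g * y)) by ring.
  rewrite (Rmult_assoc (Rabs g)).
  apply (Rpower_1p_taylor_step g (fun y => 1 + g * y) (fun _ => 1)); auto.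
  - apply Rmult_le_pos; [apply Rabs_pos | left; apply exp_pos].
  - ring.
  - intros c. auto_derive; auto; ring.
  - intros c Hc. replace (g - 2) with (g - 1 - 1) by ring.
    rewrite pow_1. now apply Rpower_1p_taylor1.
Qed.

Lemma Rpower_1p_taylor3 g y : Rabs y <= 1/2 ->
  Rabs (Rpower (1 + y) g - 1 - g * y - g * (g - 1) / 2 * y ^ 2)
  <= Rabs g * Rabs (g - 1) * Rabs (g - 2) * exp (Rabs (g - 3)) * Rabs y ^ 3.
Proof.
  intros Hy.
  replace (Rpower (1 + y) g - 1 - g * y - g * (g - 1) / 2 * y ^ 2)
    with (Rpower (1 + y) g - (1 + g * y + g * (g - 1) / 2 * y ^ 2)) by ring.
  replace (Rabs g * Rabs (g - 1) * Rabs (g - 2) * exp (Rabs (g - 3)) * Rabs y ^ 3)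
    with (Rabs g * (Rabs (g - 1) * Rabs (g - 2) * exp (Rabs (g - 3))) * Rabs y ^ 3) by ring.
  apply (Rpower_1p_taylor_step g (fun y => 1 + g * y + g * (g - 1) / 2 * y ^ 2)
           (fun c => 1 + (g - 1) * c)); auto.
  - apply Rmult_le_pos; [apply Rmult_le_pos; apply Rabs_pos | left; apply exp_pos].
  - ring.
  - intros c. auto_derive; auto; field.
  - intros c Hc. replace (g - 3) with (g - 1 - 2) by ring.
    replace (Rpower (1 + c) (g - 1) - (1 + (g - 1) * c))
      with (Rpower (1 + c) (g - 1) - 1 - (g - 1) * c) by ring.
    replace (g - 2) with (g - 1 - 1) by ring.
    now apply Rpower_1p_taylor2.
Qed.

Lemma ln_le_sub_1 z : 0 < z -> ln z <= z - 1.
Proof.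
  intros Hz. pose proof (exp_ineq1_le (ln z)) as H. rewrite exp_ln in H; lra.
Qed.

Lemma ln_le_ln_add_div z c : 0 < z -> 0 < c -> ln z <= ln c + z / c.
Proof.
  intros Hz Hc. pose proof (ln_le_sub_1 (z / c)) as H.
  unfold Rdiv in *. rewrite ln_mult, ln_Rinv in H by (auto; apply Rinv_0_lt_compat; lra).
  assert (0 < z * / c) by (apply Rdiv_lt_0_compat; lra). lra.
Qed.

Definition ell (x : R) : R := ln (x ^ 2 + 2).
Definition theta (x : R) : R := x ^ 2 / (x ^ 2 + 2).

(* [Ebase p a x = x^(1-p) ell(x)^(-a)] is [x] divided by the right-hand side of the ODE;
   [qrate p a x = - x Ebase'(x) / Ebase x] and [qrate_xderiv a x = x qrate'(x)]. *)
Definition Ebase (p a x : R) : R := exp ((1 - p) * ln x - a * ln (ell x)).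
Definition qrate (p a x : R) : R := p - 1 + 2 * a * theta x / ell x.
Definition qrate_xderiv (a x : R) : R :=
  2 * a * (4 * theta x / ((x ^ 2 + 2) * ell x) - 2 * theta x ^ 2 / ell x ^ 2).

(* [Phi_flow p a k x = x Phi_k'(x) / Ebase p a x] is the time derivative of [Phi p a k (psi t)]
   along the ODE. *)
Definition Phi (p a k x : R) : R := Ebase p a x * (1 + k / ell x ^ 2) / qrate p a x.
Definition Phi_flow (p a k x : R) : R :=
  let M := 1 + k / ell x ^ 2 in
  - M - M * qrate_xderiv a x / qrate p a x ^ 2 - 4 * k * theta x / (qrate p a x * ell x ^ 3).

Definition Kc (p a : R) : R := 96 * Rabs a / (p - 1) ^ 2 + 1.
Definition ell0 (p a : R) : R := 4 * Rabs a / (p - 1) + 2 * Kc p a + 1.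

Lemma theta_bounds x : 0 <= theta x <= 1.
Proof.
  unfold theta. assert (0 <= x ^ 2) by nra. split.
  - apply Rmult_le_pos; [lra | left; apply Rinv_0_lt_compat; lra].
  - apply Rmult_le_reg_r with (x ^ 2 + 2); [lra |].
    unfold Rdiv. rewrite Rmult_assoc, Rinv_l; lra.
Qed.

Lemma ell_le x : ell x <= x ^ 2 + 2.
Proof. unfold ell. pose proof (ln_le_sub_1 (x ^ 2 + 2)). nra. Qed.

Section Regime.

Variables p a : R.
Hypothesis Hp : 1 < p.

Lemma Kc_ge_1 : 1 <= Kc p a.
Proof.
  unfold Kc. assert (0 <= 96 * Rabs a / (p - 1) ^ 2); [|lra].
  apply Rmult_le_pos; [pose proof (Rabs_pos a); lra | left; apply Rinv_0_lt_compat; nra].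
Qed.

Variable x : R.
Hypothesis Hell : ell0 p a <= ell x.

Lemma ell_ge_3 : 3 <= ell x.
Proof.
  pose proof Kc_ge_1. pose proof Hell as Hl0; unfold ell0 in Hl0.
  assert (0 <= 4 * Rabs a / (p - 1)); [|lra].
  apply Rmult_le_pos; [pose proof (Rabs_pos a); lra | left; apply Rinv_0_lt_compat; lra].
Qed.

Lemma Kc_div_ell2_le : Kc p a / ell x ^ 2 <= 1/2.
Proof.
  pose proof ell_ge_3. pose proof Kc_ge_1. pose proof Hell as Hl0; unfold ell0 in Hl0.
  assert (4 * Rabs a / (p - 1) >= 0).
  { apply Rle_ge, Rmult_le_pos; [pose proof (Rabs_pos a); lra | left; apply Rinv_0_lt_compat; lra]. }
  apply Rmult_le_reg_r with (ell x ^ 2); [nra |].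
  unfold Rdiv. rewrite Rmult_assoc, Rinv_l; nra.
Qed.

Lemma beta_bound : Rabs (2 * a * theta x / ell x) <= 2 * Rabs a / ell x.
Proof.
  pose proof ell_ge_3. pose proof (theta_bounds x).
  assert (0 < / ell x) by (apply Rinv_0_lt_compat; lra).
  unfold Rdiv. rewrite !Rabs_mult, (Rabs_pos_eq 2), (Rabs_pos_eq (theta x)),
    (Rabs_pos_eq (/ ell x)) by lra.
  rewrite Rmult_assoc.
  apply Rmult_le_compat_l; [pose proof (Rabs_pos a); lra | nra].
Qed.

Lemma abs_a_div_ell_le : 2 * Rabs a / ell x <= (p - 1) / 2.
Proof.
  pose proof ell_ge_3. pose proof Hell as Hl0; unfold ell0 in Hl0. pose proof Kc_ge_1.
  apply Rmult_le_reg_r with (ell x); [lra |].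
  unfold Rdiv. rewrite Rmult_assoc, Rinv_l by lra.
  assert (4 * Rabs a * / (p - 1) * (p - 1) = 4 * Rabs a) by (field; repeat split; lra).
  assert (4 * Rabs a * / (p - 1) <= ell x) by lra. nra.
Qed.

Lemma qrate_bounds : (p - 1) / 2 <= qrate p a x <= 3 * (p - 1) / 2.
Proof.
  pose proof beta_bound. pose proof abs_a_div_ell_le.
  unfold qrate. apply Rabs_le_between in H. lra.
Qed.

Lemma qrate_xderiv_bound : Rabs (qrate_xderiv a x) <= 12 * Rabs a / ell x ^ 2.
Proof.
  pose proof ell_ge_3. pose proof (theta_bounds x). pose proof (ell_le x).
  unfold qrate_xderiv. set (l := ell x) in *. set (th := theta x) in *. clearbody l th.
  assert (Hil : 0 < / l) by (apply Rinv_0_lt_compat; lra).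
  assert (HY : / (x ^ 2 + 2) <= / l) by (apply Rinv_le_contravar; lra).
  assert (HY0 : 0 < / (x ^ 2 + 2)) by (apply Rinv_0_lt_compat; lra).
  assert (E1 : 0 <= 4 * th / ((x ^ 2 + 2) * l) <= 4 / l ^ 2).
  { replace (4 * th / ((x ^ 2 + 2) * l)) with (4 * th * / (x ^ 2 + 2) * / l) by (field; repeat split; lra).
    replace (4 / l ^ 2) with (4 * 1 * / l * / l) by (field; repeat split; lra).
    split; [repeat apply Rmult_le_pos; lra |].
    apply Rmult_le_compat_r; [lra |]. apply Rmult_le_compat; nra. }
  assert (E2 : 0 <= 2 * th ^ 2 / l ^ 2 <= 2 / l ^ 2).
  { unfold Rdiv. assert (0 < / l ^ 2) by (apply Rinv_0_lt_compat; nra).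
    assert (0 <= th ^ 2 <= 1) by nra. split; nra. }
  rewrite Rabs_mult, (Rabs_mult 2), (Rabs_pos_eq 2) by lra.
  replace (12 * Rabs a / l ^ 2) with (2 * Rabs a * (4 / l ^ 2 + 2 / l ^ 2)) by (field; repeat split; lra).
  apply Rmult_le_compat_l; [pose proof (Rabs_pos a); lra |].
  apply Rabs_le; lra.
Qed.

(* The constant [Kc] is chosen so that [Kc / ell^2] beats the correction [x q'/q^2],
   which is at most [48 |a| / ((p-1)^2 ell^2)]. *)
Lemma Phi_flow_bounds : Phi_flow p a (Kc p a) x < -1 < Phi_flow p a (- Kc p a) x.
Proof.
  pose proof ell_ge_3. pose proof Kc_div_ell2_le. pose proof qrate_bounds.
  pose proof qrate_xderiv_bound. pose proof (theta_bounds x). pose proof Kc_ge_1.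
  set (c := 48 * Rabs a / (p - 1) ^ 2).
  assert (Hc : 0 <= c).
  { apply Rmult_le_pos; [pose proof (Rabs_pos a); lra | left; apply Rinv_0_lt_compat; nra]. }
  assert (HKc : Kc p a = 2 * c + 1) by (unfold Kc, c; field; lra).
  set (l := ell x) in *. set (q := qrate p a x) in *. set (K := Kc p a) in *.
  set (G := qrate_xderiv a x / q ^ 2).
  assert (HG : Rabs G <= c / l ^ 2).
  { unfold G, Rdiv. rewrite Rabs_mult, Rabs_inv, (Rabs_pos_eq (q ^ 2)) by nra.
    replace (c * / l ^ 2) with (12 * Rabs a / l ^ 2 * / ((p - 1) / 2) ^ 2)
      by (unfold c; field; lra).
    apply Rmult_le_compat; [apply Rabs_pos | left; apply Rinv_0_lt_compat; nra | auto |].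
    apply Rinv_le_contravar; nra. }
  apply Rabs_le_between in HG.
  assert (Hcl : 0 <= c / l ^ 2) by (apply Rmult_le_pos; [lra | left; apply Rinv_0_lt_compat; nra]).
  assert (HKl : K / l ^ 2 = 2 * (c / l ^ 2) + 1 / l ^ 2) by (rewrite HKc; field; lra).
  assert (Hl2 : 0 < 1 / l ^ 2) by (apply Rdiv_lt_0_compat; nra).
  assert (Hcorr : 0 <= 4 * K * theta x / (q * l ^ 3)).
  { apply Rmult_le_pos; [nra | left; apply Rinv_0_lt_compat; apply Rmult_lt_0_compat; nra]. }
  unfold Phi_flow. fold l q. cbv zeta.
  replace ((1 + K / l ^ 2) * qrate_xderiv a x / q ^ 2) with ((1 + K / l ^ 2) * G) by (unfold G, Rdiv; ring).
  replace ((1 + - K / l ^ 2) * qrate_xderiv a x / q ^ 2) with ((1 - K / l ^ 2) * G)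
    by (unfold G, Rdiv; ring).
  replace (4 * - K * theta x / (q * l ^ 3)) with (- (4 * K * theta x / (q * l ^ 3))) by (unfold Rdiv; ring).
  replace (- K / l ^ 2) with (- (K / l ^ 2)) by (unfold Rdiv; ring).
  split; nra.
Qed.

Lemma h_le_of_hq_bound h :
  Rabs (h * qrate p a x - 1) <= Kc p a / ell x ^ 2 -> h <= 3 / (p - 1).
Proof.
  intros Hhq. pose proof qrate_bounds. pose proof Kc_div_ell2_le.
  apply Rabs_le_between in Hhq.
  apply Rmult_le_reg_r with ((p - 1) / 2); [lra |].
  replace (3 / (p - 1) * ((p - 1) / 2)) with (3 / 2) by (field; lra).
  destruct (Rle_lt_dec h 0); nra.
Qed.

Lemma Phi_Kc_pos : 0 < Phi p a (Kc p a) x.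
Proof.
  pose proof qrate_bounds. pose proof Kc_ge_1. pose proof ell_ge_3.
  unfold Phi. apply Rdiv_lt_0_compat; [| lra].
  apply Rmult_lt_0_compat; [apply exp_pos |].
  assert (0 < Kc p a / ell x ^ 2) by (apply Rdiv_lt_0_compat; nra). lra.
Qed.

Lemma Phi_neg_Kc_bounds :
  Ebase p a x / (3 * (p - 1)) <= Phi p a (- Kc p a) x <= 2 / (p - 1) * Ebase p a x.
Proof.
  pose proof qrate_bounds. pose proof Kc_div_ell2_le. pose proof Kc_ge_1. pose proof ell_ge_3.
  assert (HE : 0 < Ebase p a x) by apply exp_pos.
  assert (HK : 0 <= Kc p a / ell x ^ 2) by (apply Rmult_le_pos; [lra | left; apply Rinv_0_lt_compat; nra]).
  unfold Phi. replace (- Kc p a / ell x ^ 2) with (- (Kc p a / ell x ^ 2)) by (unfold Rdiv; ring).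
  set (q := qrate p a x) in *. set (k := Kc p a / ell x ^ 2) in *. clearbody q k.
  split.
  - apply Rmult_le_reg_r with (3 * (p - 1) * q); [nra |].
    replace (Ebase p a x / (3 * (p - 1)) * (3 * (p - 1) * q)) with (Ebase p a x * q) by (field; lra).
    replace (Ebase p a x * (1 + - k) / q * (3 * (p - 1) * q))
      with (Ebase p a x * ((1 - k) * (3 * (p - 1)))) by (field; lra).
    apply Rmult_le_compat_l; nra.
  - apply Rmult_le_reg_r with ((p - 1) * q); [nra |].
    replace (Ebase p a x * (1 + - k) / q * ((p - 1) * q)) with (Ebase p a x * ((1 - k) * (p - 1)))
      by (field; lra).
    replace (2 / (p - 1) * Ebase p a x * ((p - 1) * q)) with (Ebase p a x * (2 * q)) by (field; lra).
    apply Rmult_le_compat_l; nra.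
Qed.

Lemma remaining_time_hq_bound e :
  Phi p a (- Kc p a) x <= e <= Phi p a (Kc p a) x ->
  Rabs (e / Ebase p a x * qrate p a x - 1) <= Kc p a / ell x ^ 2.
Proof.
  intros He. pose proof qrate_bounds.
  assert (HE : 0 < Ebase p a x) by apply exp_pos.
  unfold Phi in He.
  replace (- Kc p a / ell x ^ 2) with (- (Kc p a / ell x ^ 2)) in He by (unfold Rdiv; ring).
  set (q := qrate p a x) in *. set (k := Kc p a / ell x ^ 2) in *. clearbody q k.
  assert (Hq : 0 < Ebase p a x / q) by (apply Rdiv_lt_0_compat; lra).
  replace (e / Ebase p a x * q - 1) with ((e - Ebase p a x / q) / (Ebase p a x / q)) by (field; lra).
  unfold Rdiv at 1. rewrite Rabs_mult, Rabs_inv, (Rabs_pos_eq (Ebase p a x / q)) by lra.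
  apply Rmult_le_reg_r with (Ebase p a x / q); [lra |].
  rewrite Rmult_assoc, Rinv_l, Rmult_1_r by lra. apply Rabs_le.
  replace (Ebase p a x * (1 + k) / q) with (Ebase p a x / q + k * (Ebase p a x / q)) in He by (field; lra).
  replace (Ebase p a x * (1 + - k) / q) with (Ebase p a x / q - k * (Ebase p a x / q)) in He
    by (field; lra).
  lra.
Qed.

Lemma ln_Ebase_ge : 0 < x -> - ((p - 1) / 2 + Rabs a) * ell x <= ln (Ebase p a x).
Proof.
  intros Hx. pose proof ell_ge_3.
  unfold Ebase. rewrite ln_exp.
  assert (Hlnx : 2 * ln x <= ell x).
  { replace (2 * ln x) with (ln (x ^ 2)) by (rewrite ln_pow by lra; simpl; ring).
    unfold ell. apply ln_le; nra. }
  assert (Hll0 : 0 <= ln (ell x)) by (rewrite <- ln_1; apply ln_le; lra).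
  assert (Hll : ln (ell x) <= ell x) by (pose proof (ln_le_sub_1 (ell x)); lra).
  assert (a * ln (ell x) <= Rabs a * ell x).
  { apply Rle_trans with (Rabs a * ln (ell x));
      [apply Rmult_le_compat_r; [lra | apply Rle_abs] | apply Rmult_le_compat_l; [apply Rabs_pos | lra]]. }
  nra.
Qed.

Lemma neg_ln_le_of_Phi_le e : 0 < x -> Phi p a (- Kc p a) x <= e ->
  - ln e <= ((p - 1) / 2 + Rabs a) * ell x + Rabs (ln (3 * (p - 1))).
Proof.
  intros Hx He. pose proof (ln_Ebase_ge Hx). pose proof Phi_neg_Kc_bounds as [Hlow _].
  assert (HE : 0 < Ebase p a x / (3 * (p - 1))) by (apply Rdiv_lt_0_compat; [apply exp_pos | lra]).
  assert (Hln : ln (Ebase p a x / (3 * (p - 1))) <= ln e) by (apply ln_le; lra).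
  unfold Rdiv in Hln.
  rewrite ln_mult, ln_Rinv in Hln by (try apply Rinv_0_lt_compat; try apply exp_pos; lra).
  pose proof (Rle_abs (ln (3 * (p - 1)))). lra.
Qed.

End Regime.

Lemma is_derive_Phi p a k x : 0 < x -> qrate p a x <> 0 ->
  is_derive (Phi p a k) x (Ebase p a x / x * Phi_flow p a k x).
Proof.
  intros Hx Hq.
  assert (Hl : 0 < ell x) by (unfold ell; rewrite <- ln_1; apply ln_increasing; nra).
  unfold Phi_flow, Phi, Ebase, qrate, qrate_xderiv, theta in *. cbv zeta.
  unfold ell in *. set (l := ln (x ^ 2 + 2)) in *.
  auto_derive; replace (x * (x * 1)) with (x ^ 2) by ring; fold l.
  - unfold Rdiv in Hq. repeat split; auto; nra.
  - replace ((1 - p) * ln x + - (a * ln l)) with ((1 - p) * ln x - a * ln l) by ring.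
    set (E := exp ((1 - p) * ln x - a * ln l)). clearbody l E.
    assert (Hq2 : (p - 1) * ((x ^ 2 + 2) * l) + 2 * a * x ^ 2 <> 0).
    { replace ((p - 1) * ((x ^ 2 + 2) * l) + 2 * a * x ^ 2)
        with ((p - 1 + 2 * a * (x ^ 2 / (x ^ 2 + 2)) / l) * ((x ^ 2 + 2) * l))
        by (field; repeat split; nra).
      apply Rmult_integral_contrapositive; split; [exact Hq | nra]. }
    field. repeat split; auto; nra.
Qed.

Lemma is_derive_Phi_along p a k (psi : R -> R) t :
  0 < psi t -> qrate p a (psi t) <> 0 ->
  is_derive psi t (Rpower (psi t) p * Rpower (ell (psi t)) a) ->
  is_derive (fun t => Phi p a k (psi t) + t) t (Phi_flow p a k (psi t) + 1).
Proof.
  intros Hpos Hq Hd.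
  pose proof (is_derive_comp (Phi p a k) psi t _ _ (is_derive_Phi p a k (psi t) Hpos Hq) Hd) as Hc.
  pose proof (is_derive_plus _ _ t _ _ Hc (is_derive_id t)) as Hs.
  assert (Hspeed : Rpower (psi t) p * Rpower (ell (psi t)) a * Ebase p a (psi t) = psi t).
  { unfold Rpower, Ebase. rewrite <- !exp_plus.
    replace (p * ln (psi t) + a * ln (ell (psi t)) + ((1 - p) * ln (psi t) - a * ln (ell (psi t))))
      with (ln (psi t)) by ring.
    now apply exp_ln. }
  match type of Hs with is_derive _ _ ?W => replace (Phi_flow p a k (psi t) + 1) with W; [exact Hs |] end.
  unfold scal, plus, one; simpl. unfold mult; simpl.
  replace (Rpower (psi t) p * Rpower (ell (psi t)) a * (Ebase p a (psi t) / psi t * Phi_flow p a k (psi t)))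
    with (Rpower (psi t) p * Rpower (ell (psi t)) a * Ebase p a (psi t) / psi t * Phi_flow p a k (psi t))
    by (unfold Rdiv; ring).
  rewrite Hspeed. field. lra.
Qed.

Lemma Ebase_le p a x : 1 < p -> 3 <= x ->
  Ebase p a x <= exp (Rabs a * ln (6 * Rabs a / (p - 1) + 1) - (p - 1) / 2 * ln x).
Proof.
  intros Hp Hx. apply exp_le_compat.
  set (c := 6 * Rabs a / (p - 1) + 1).
  pose proof (Rabs_pos a) as Ha.
  assert (Hc0 : 0 <= 6 * Rabs a / (p - 1))
    by (apply Rmult_le_pos; [lra | left; apply Rinv_0_lt_compat; lra]).
  assert (Hy3 : ln 3 <= ln x) by (apply ln_le; lra).
  assert (Hl3 : ell x <= 3 * ln x).
  { assert (ell x <= ln (3 * x ^ 2)) by (apply ln_le; nra).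
    rewrite ln_mult, ln_pow in H by nra. simpl INR in H. lra. }
  assert (Hl1 : 1 <= ell x).
  { unfold ell. rewrite <- (ln_exp 1). apply ln_le; [apply exp_pos |]. pose proof exp_le_3. nra. }
  assert (Hll : 0 <= ln (ell x)) by (rewrite <- ln_1; apply ln_le; lra).
  assert (Hlnl : ln (ell x) <= ln c + ell x / c) by (apply ln_le_ln_add_div; unfold c; lra).
  assert (Hac : 3 * Rabs a / c <= (p - 1) / 2).
  { apply Rmult_le_reg_r with c; [unfold c; lra |].
    unfold Rdiv. rewrite Rmult_assoc, Rinv_l by (unfold c; lra).
    unfold c. assert (6 * Rabs a / (p - 1) * (p - 1) = 6 * Rabs a) by (field; lra). nra. }
  assert (- a * ln (ell x) <= Rabs a * ln (ell x)) by (apply Rmult_le_compat_r; [lra | split_Rabs; lra]).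
  assert (Rabs a * (ell x / c) <= (p - 1) / 2 * ln x).
  { assert (Hy0 : 0 <= ln x) by (rewrite <- ln_1; apply ln_le; lra).
    apply Rle_trans with (3 * Rabs a / c * ln x); [| apply Rmult_le_compat_r; lra].
    unfold Rdiv. replace (3 * Rabs a * / c * ln x) with (Rabs a * (3 * ln x * / c)) by ring.
    apply Rmult_le_compat_l; [lra |].
    apply Rmult_le_compat_r; [left; apply Rinv_0_lt_compat; unfold c; lra | lra]. }
  nra.
Qed.

Lemma Ebase_small p a eps : 1 < p -> 0 < eps ->
  exists X, forall x, X <= x -> Ebase p a x < eps.
Proof.
  intros Hp Heps.
  set (m := Rabs a * ln (6 * Rabs a / (p - 1) + 1)).
  set (Y := 2 * (m - ln eps) / (p - 1)).
  exists (Rmax 3 (exp Y + 1)). intros x Hx.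
  pose proof (Rmax_l 3 (exp Y + 1)). pose proof (Rmax_r 3 (exp Y + 1)).
  assert (HY : Y < ln x) by (rewrite <- (ln_exp Y); apply ln_increasing; [apply exp_pos | lra]).
  eapply Rle_lt_trans; [apply Ebase_le; lra |]. fold m.
  rewrite <- (exp_ln eps) by lra. apply exp_increasing.
  assert (Y * (p - 1) = 2 * (m - ln eps)) by (unfold Y; field; lra).
  nra.
Qed.

Lemma le_of_increasing_near (g : R -> R) a b c :
  (forall t1 t2, a < t1 -> t1 < t2 -> t2 < b -> g t1 < g t2) ->
  (forall eps, 0 < eps -> exists eta, 0 < eta /\ forall t, b - eta < t < b -> g t < c + eps) ->
  forall t, a < t < b -> g t <= c.
Proof.
  intros Hincr Hnear t Ht. apply Rle_plus_epsilon. intros eps Heps.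
  destruct (Hnear eps Heps) as [eta [Heta Hg]].
  set (t1 := (Rmax t (b - eta) + b) / 2).
  pose proof (Rmax_l t (b - eta)). pose proof (Rmax_r t (b - eta)).
  assert (Rmax t (b - eta) < b) by (apply Rmax_lub_lt; lra).
  left. apply Rlt_trans with (g t1); [apply Hincr | apply Hg]; unfold t1; lra.
Qed.

Lemma blowup_sol_unbounded p a T psi : is_blowup_sol p a T psi ->
  forall M, exists eta, 0 < eta /\ forall t, T - eta < t < T -> M < psi t.
Proof.
  intros (_ & _ & Hlim) M.
  destruct (Hlim (fun y => M < y)) as [eta Heta]; [now exists M |].
  exists eta. split; [apply cond_pos |].
  intros t Ht. apply Heta; [| lra].
  change (Rabs (t - T) < eta). apply Rabs_lt_between'. lra.
Qed.

Lemma blowup_sol_regime p a T psi : is_blowup_sol p a T psi ->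
  exists delta, 0 < delta /\
    forall t, T - delta < t < T -> 1 <= psi t /\ ell0 p a <= ell (psi t).
Proof.
  intros Hsol.
  destruct (blowup_sol_unbounded p a T psi Hsol (exp (ell0 p a) + 1)) as [delta [Hdelta Hbig]].
  exists delta. split; [exact Hdelta |]. intros t Ht.
  specialize (Hbig t Ht). pose proof (exp_pos (ell0 p a)). split; [lra |].
  rewrite <- (ln_exp (ell0 p a)). apply ln_le; [lra | nra].
Qed.

Section Blowup.

Variables (p a T : R) (psi : R -> R).
Hypothesis Hp : 1 < p.
Hypothesis Hsol : is_blowup_sol p a T psi.
Variable delta : R.
Hypothesis Hregime : forall t, T - delta < t < T -> 1 <= psi t /\ ell0 p a <= ell (psi t).

Lemma is_derive_Phi_psi k t : T - delta < t < T ->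
  is_derive (fun t => Phi p a k (psi t) + t) t (Phi_flow p a k (psi t) + 1).
Proof.
  intros Ht. destruct (Hregime t Ht) as [Hx Hell].
  destruct Hsol as (_ & Hder & _).
  apply is_derive_Phi_along; [lra | | apply Hder; lra].
  pose proof (qrate_bounds p a Hp (psi t) Hell). lra.
Qed.

Lemma remaining_time_le_Phi t : T - delta < t < T -> T - t <= Phi p a (Kc p a) (psi t).
Proof.
  intros Ht.
  enough (- (Phi p a (Kc p a) (psi t) + t) <= - T) by lra.
  apply (le_of_increasing_near (fun t => - (Phi p a (Kc p a) (psi t) + t)) (T - delta) T); auto.
  - intros t1 t2 H1 H12 H2.
    apply (incr_function (fun t => - (Phi p a (Kc p a) (psi t) + t)) (T - delta) T
             (fun t => - (Phi_flow p a (Kc p a) (psi t) + 1))); simpl; auto.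
    + intros s Hs1 Hs2. apply (is_derive_opp (fun t => Phi p a (Kc p a) (psi t) + t)).
      apply is_derive_Phi_psi; lra.
    + intros s Hs1 Hs2. destruct (Hregime s) as [Hx Hell]; [lra |].
      destruct (Phi_flow_bounds p a Hp (psi s) Hell). lra.
  - intros eps Heps. exists (Rmin eps delta). split; [apply Rmin_pos; lra |].
    intros s Hs. pose proof (Rmin_l eps delta). pose proof (Rmin_r eps delta).
    destruct (Hregime s) as [Hx Hell]; [lra |].
    pose proof (Phi_Kc_pos p a Hp (psi s) Hell). lra.
Qed.

Lemma Phi_le_remaining_time t : T - delta < t < T -> Phi p a (- Kc p a) (psi t) <= T - t.
Proof.
  intros Ht.
  enough (Phi p a (- Kc p a) (psi t) + t <= T) by lra.
  apply (le_of_increasing_near (fun t => Phi p a (- Kc p a) (psi t) + t) (T - delta) T); auto.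
  - intros t1 t2 H1 H12 H2.
    apply (incr_function (fun t => Phi p a (- Kc p a) (psi t) + t) (T - delta) T
             (fun t => Phi_flow p a (- Kc p a) (psi t) + 1)); simpl; auto.
    + intros s Hs1 Hs2. apply is_derive_Phi_psi; lra.
    + intros s Hs1 Hs2. destruct (Hregime s) as [Hx Hell]; [lra |].
      destruct (Phi_flow_bounds p a Hp (psi s) Hell). lra.
  - intros eps Heps.
    destruct (Ebase_small p a (eps * (p - 1) / 2) Hp) as [X HX];
      [apply Rmult_lt_0_compat; [apply Rmult_lt_0_compat |]; lra |].
    destruct (blowup_sol_unbounded p a T psi Hsol X) as [eta [Heta Hbig]].
    exists (Rmin eta delta). split; [apply Rmin_pos; lra |].
    intros s Hs. pose proof (Rmin_l eta delta). pose proof (Rmin_r eta delta).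
    destruct (Hregime s) as [Hx Hell]; [lra |].
    pose proof (Phi_neg_Kc_bounds p a Hp (psi s) Hell) as [_ HPhi].
    assert (HE : Ebase p a (psi s) < eps * (p - 1) / 2) by (apply HX; left; apply Hbig; lra).
    assert (Hlt : 2 / (p - 1) * Ebase p a (psi s) < 2 / (p - 1) * (eps * (p - 1) / 2))
      by (apply Rmult_lt_compat_l; [apply Rdiv_lt_0_compat |]; lra).
    replace (2 / (p - 1) * (eps * (p - 1) / 2)) with eps in Hlt by (field; lra).
    lra.
Qed.

End Blowup.

Lemma hfun_eq p a T psi s : hfun p a T psi s = exp (- s) / Ebase p a (psi1 psi T s).
Proof.
  unfold hfun, lnpow, rpow, Ebase, Rpower, Rdiv. fold (ell (psi1 psi T s)).
  rewrite Rmult_assoc, <- exp_plus, <- exp_Ropp. f_equal. f_equal. ring.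
Qed.

Lemma hfun_estimates p a T psi : 1 < p -> is_blowup_sol p a T psi ->
  exists S, 3 <= S /\ forall s, S < s ->
    let x := psi1 psi T s in
    ell0 p a <= ell x /\ 0 < hfun p a T psi s /\
    Rabs (hfun p a T psi s * qrate p a x - 1) <= Kc p a / ell x ^ 2 /\
    s <= (p - 1 + 2 * Rabs a) * ell x.
Proof.
  intros Hp Hsol.
  destruct (blowup_sol_regime p a T psi Hsol) as [delta [Hdelta Hregime]].
  set (c0 := Rabs (ln (3 * (p - 1)))).
  exists (Rmax 3 (Rmax (- ln delta) (2 * c0))). split; [apply Rmax_l |].
  intros s Hs x.
  pose proof (Rmax_l 3 (Rmax (- ln delta) (2 * c0))). pose proof (Rmax_r 3 (Rmax (- ln delta) (2 * c0))).
  pose proof (Rmax_l (- ln delta) (2 * c0)). pose proof (Rmax_r (- ln delta) (2 * c0)).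
  assert (Hes : 0 < exp (- s) < delta).
  { split; [apply exp_pos |]. rewrite <- (exp_ln delta) by lra. apply exp_increasing. lra. }
  assert (Ht : T - delta < T - exp (- s) < T) by lra.
  destruct (Hregime _ Ht) as [Hx Hell]. fold (psi1 psi T s) x in Hx, Hell.
  pose proof (Phi_le_remaining_time p a T psi Hp Hsol delta Hregime _ Ht) as Hlow.
  pose proof (remaining_time_le_Phi p a T psi Hp Hsol delta Hregime _ Ht) as Hup.
  replace (T - (T - exp (- s))) with (exp (- s)) in Hlow, Hup by ring.
  fold (psi1 psi T s) x in Hlow, Hup.
  rewrite hfun_eq. fold x.
  repeat split; auto.
  - apply Rdiv_lt_0_compat; [apply exp_pos | apply exp_pos].
  - now apply remaining_time_hq_bound.
  - pose proof (neg_ln_le_of_Phi_le p a Hp x Hell (exp (- s)) ltac:(lra) Hlow) as Hs'.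
    rewrite ln_exp in Hs'. fold c0 in Hs'. lra.
Qed.

Lemma second_order_expansion h p w beta tau rho :
  let P := 1 + p * w + p * (p - 1) / 2 * w ^ 2 + tau in
  let u := h * (p - 1 + beta) - 1 in
  h * P * (1 + beta * w + rho) - h * (w + 1) - w - p * w ^ 2 / 2
  = u * w + p / 2 * (u - h * beta) * w ^ 2
    + h * (p * beta * w ^ 2 + p * (p - 1) / 2 * beta * w ^ 3 + tau * (1 + beta * w) + P * rho).
Proof. intros P u. unfold P, u. field. Qed.

Lemma expansion_majorant_le Q il W : 1 <= Q -> 0 <= il <= 1 -> 0 <= W <= 1 ->
  Q * il ^ 2 * W + Q * (Q * il ^ 2 + Q * (Q * il)) * W ^ 2
  + Q * (Q * (Q * il) * W ^ 2 + Q * (Q * il) * W ^ 3 + Q * W ^ 3 * (1 + Q * il * W)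
         + Q * (Q * W ^ 2 * il))
  <= 4 * Q ^ 3 * (W * il ^ 2 + W ^ 2 * il + W ^ 3).
Proof.
  intros HQ Hil HW.
  assert (HQ3 : Q <= Q ^ 3) by nra. assert (HQ23 : Q ^ 2 <= Q ^ 3) by nra.
  assert (HQ0 : 0 <= Q ^ 2) by nra. assert (HQ30 : 0 <= Q ^ 3) by nra.
  assert (HW3 : 0 <= W ^ 3) by (apply pow_le; lra).
  assert (HilW : il * W ^ 3 <= W ^ 3) by nra.
  assert (HilW4 : il * W ^ 4 <= W ^ 3) by (pose proof (pow_le W 4 (proj1 HW)); nra).
  assert (M1 : Q * (il ^ 2 * W) <= Q ^ 3 * (il ^ 2 * W))
    by (apply Rmult_le_compat_r; [apply Rmult_le_pos; nra | exact HQ3]).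
  assert (M2 : Q ^ 2 * (W ^ 2 * il ^ 2) <= Q ^ 3 * (W ^ 2 * il))
    by (apply Rmult_le_compat; [lra | apply Rmult_le_pos; nra | lra | apply Rmult_le_compat_l; nra]).
  assert (M3 : Q ^ 3 * (il * W ^ 3) <= Q ^ 3 * W ^ 3) by (apply Rmult_le_compat_l; lra).
  assert (M4 : Q ^ 2 * W ^ 3 <= Q ^ 3 * W ^ 3) by (apply Rmult_le_compat_r; lra).
  assert (M5 : Q ^ 3 * (il * W ^ 4) <= Q ^ 3 * W ^ 3) by (apply Rmult_le_compat_l; lra).
  assert (0 <= Q ^ 3 * (il ^ 2 * W)) by (apply Rmult_le_pos; [lra | apply Rmult_le_pos; nra]).
  assert (0 <= Q ^ 3 * W ^ 3) by (apply Rmult_le_pos; lra).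
  lra.
Qed.

Lemma expansion_remainder_bound Q h p aa u beta tau P rho w il :
  1 <= Q -> 0 <= il <= 1 -> Rabs w <= 1 ->
  0 <= h <= Q -> 0 <= p <= Q -> Rabs aa <= Q ->
  Rabs u <= Q * il ^ 2 -> Rabs beta <= Q * il -> Rabs tau <= Q * Rabs w ^ 3 ->
  Rabs P <= Q -> Rabs rho <= Q * Rabs w ^ 2 * il ->
  Rabs (u * w + p / 2 * (u - h * beta) * w ^ 2
        + h * (p * beta * w ^ 2 + aa * beta * w ^ 3 + tau * (1 + beta * w) + P * rho))
  <= 4 * Q ^ 3 * (Rabs w * il ^ 2 + Rabs w ^ 2 * il + Rabs w ^ 3).
Proof.
  intros HQ Hil Hw Hh Hp Haa Hu Hbeta Htau HP Hrho.
  assert (Hw2 : Rabs (w ^ 2) <= Rabs w ^ 2) by (rewrite <- RPow_abs; lra).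
  assert (Hw3 : Rabs (w ^ 3) <= Rabs w ^ 3) by (rewrite <- RPow_abs; lra).
  assert (HW : 0 <= Rabs w) by apply Rabs_pos.
  set (W := Rabs w) in *.
  assert (Habsh : Rabs h <= Q) by (rewrite Rabs_pos_eq; lra).
  assert (Habsp : Rabs (p / 2) <= Q) by (rewrite Rabs_pos_eq; lra).
  assert (Hp' : Rabs p <= Q) by (rewrite Rabs_pos_eq; lra).
  assert (B1 : Rabs (u * w) <= Q * il ^ 2 * W) by (apply Rabs_mult_le; [exact Hu | apply Rle_refl]).
  assert (B2 : Rabs (p / 2 * (u - h * beta) * w ^ 2) <= Q * (Q * il ^ 2 + Q * (Q * il)) * W ^ 2).
  { apply Rabs_mult_le; [apply Rabs_mult_le; [exact Habsp |] | exact Hw2].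
    pose proof (Rabs_mult_le h beta _ _ Habsh Hbeta).
    pose proof (Rabs_triang u (- (h * beta))). rewrite Rabs_Ropp in H0. unfold Rminus. lra. }
  assert (B3 : Rabs (p * beta * w ^ 2) <= Q * (Q * il) * W ^ 2)
    by (apply Rabs_mult_le; [apply Rabs_mult_le |]; assumption).
  assert (B4 : Rabs (aa * beta * w ^ 3) <= Q * (Q * il) * W ^ 3)
    by (apply Rabs_mult_le; [apply Rabs_mult_le |]; assumption).
  assert (B5 : Rabs (tau * (1 + beta * w)) <= Q * W ^ 3 * (1 + Q * il * W)).
  { apply Rabs_mult_le; [exact Htau |].
    pose proof (Rabs_triang 1 (beta * w)). rewrite Rabs_R1 in H.
    pose proof (Rabs_mult_le beta w _ _ Hbeta (Rle_refl W)). lra. }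
  assert (B6 : Rabs (P * rho) <= Q * (Q * W ^ 2 * il)) by (apply Rabs_mult_le; assumption).
  assert (Hsum : Rabs (p * beta * w ^ 2 + aa * beta * w ^ 3 + tau * (1 + beta * w) + P * rho)
    <= Q * (Q * il) * W ^ 2 + Q * (Q * il) * W ^ 3 + Q * W ^ 3 * (1 + Q * il * W) + Q * (Q * W ^ 2 * il)).
  { repeat (eapply Rle_trans; [apply Rabs_triang | apply Rplus_le_compat]); assumption. }
  eapply Rle_trans; [apply Rabs_triang |].
  eapply Rle_trans;
    [apply Rplus_le_compat; [apply Rabs_triang | apply (Rabs_mult_le _ _ _ _ Habsh Hsum)] |].
  eapply Rle_trans; [| apply (expansion_majorant_le Q il W); lra]. lra.
Qed.

Lemma Rpower_abs_1p_mul p w : -1 < w ->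
  Rpower (Rabs (w + 1)) (p - 1) * (w + 1) = Rpower (1 + w) p.
Proof.
  intros Hw. unfold Rpower. rewrite Rabs_pos_eq, (Rplus_comm w 1) by lra.
  rewrite <- (exp_ln (1 + w)) at 2 by lra.
  rewrite <- exp_plus. f_equal. ring.
Qed.

Lemma ln_rescaled_ell x w :
  ln (x ^ 2 * (w + 1) ^ 2 + 2) = ell x + ln (1 + theta x * (2 * w + w ^ 2)).
Proof.
  assert (Hfac : x ^ 2 * (w + 1) ^ 2 + 2 = (x ^ 2 + 2) * (1 + theta x * (2 * w + w ^ 2)))
    by (unfold theta; field; apply Rgt_not_eq; nra).
  assert (Hpos : 0 < 1 + theta x * (2 * w + w ^ 2)).
  { apply Rmult_lt_reg_l with (x ^ 2 + 2); [nra |]. rewrite <- Hfac, Rmult_0_r.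
    assert (0 <= x ^ 2 * (w + 1) ^ 2) by (apply Rmult_le_pos; apply pow2_ge_0). lra. }
  rewrite Hfac, ln_mult by nra. reflexivity.
Qed.

Lemma quadratic_shift_bound th w : 0 <= th <= 1 -> Rabs w <= 1/8 ->
  Rabs (th * (2 * w + w ^ 2)) <= 3 * Rabs w.
Proof.
  intros Hth Hw.
  rewrite Rabs_mult, Rabs_pos_eq with (x := th) by lra.
  replace (2 * w + w ^ 2) with (w * (2 + w)) by ring. rewrite Rabs_mult.
  assert (Rabs (2 + w) <= 3) by (apply Rabs_le; split_Rabs; lra).
  pose proof (Rabs_pos w). pose proof (Rabs_pos (2 + w)).
  assert (Rabs w * Rabs (2 + w) <= 3 * Rabs w) by nra.
  assert (0 <= Rabs w * Rabs (2 + w)) by nra. nra.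
Qed.

Lemma Rpower_add_div l L a : 0 < l -> 0 < l + L ->
  Rpower (l + L) a / Rpower l a = Rpower (1 + L / l) a.
Proof.
  intros Hl HlL.
  assert (H1 : 0 < 1 + L / l) by (replace (1 + L / l) with ((l + L) / l) by (field; lra);
                                 apply Rdiv_lt_0_compat; lra).
  replace (l + L) with (l * (1 + L / l)) by (field; lra).
  rewrite <- Rpower_mult_distr by lra.
  field. apply Rgt_not_eq, exp_pos.
Qed.

Lemma Rpower_ln_ratio_expansion a l th w : 3 <= l -> 0 <= th <= 1 -> Rabs w <= 1/8 ->
  Rabs (Rpower (l + ln (1 + th * (2 * w + w ^ 2))) a / Rpower l a - 1 - 2 * a * th / l * w)
  <= (36 * (Rabs a * Rabs (a - 1) * exp (Rabs (a - 2))) + 19 * Rabs a) * Rabs w ^ 2 / l.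
Proof.
  intros Hl Hth Hw.
  set (C2 := Rabs a * Rabs (a - 1) * exp (Rabs (a - 2))).
  set (y := th * (2 * w + w ^ 2)). set (L1 := ln (1 + y)). set (eps := L1 / l).
  assert (HW : 0 <= Rabs w) by apply Rabs_pos.
  assert (Hil : 0 < / l) by (apply Rinv_0_lt_compat; lra).
  assert (Hil1 : / l <= 1/3) by (replace (1/3) with (/ 3) by field; apply Rinv_le_contravar; lra).
  pose proof (quadratic_shift_bound th w Hth Hw) as Hy. fold y in Hy.
  assert (HL1 : Rabs L1 <= 6 * Rabs w) by (pose proof (ln_1p_bound y ltac:(lra)); unfold L1; lra).
  assert (Hr2 : Rabs (L1 - y) <= 18 * Rabs w ^ 2).
  { pose proof (ln_1p_taylor1 y ltac:(lra)). pose proof (Rabs_pos y). unfold L1. nra. }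
  assert (Heps : Rabs eps <= 6 * Rabs w * / l).
  { unfold eps, Rdiv. rewrite Rabs_mult, (Rabs_pos_eq (/ l)) by lra. apply Rmult_le_compat_r; lra. }
  assert (Heps2 : Rabs eps <= 1/2) by nra.
  assert (HlL : 0 < l + L1) by (apply Rabs_le_between in HL1; lra).
  fold y L1. rewrite Rpower_add_div by lra. fold eps.
  replace (Rpower (1 + eps) a - 1 - 2 * a * th / l * w)
    with ((Rpower (1 + eps) a - 1 - a * eps) + a * (L1 - y) * / l + a * th * w ^ 2 * / l)
    by (unfold eps, y; field; lra).
  assert (T1 : Rabs (Rpower (1 + eps) a - 1 - a * eps) <= 36 * C2 * Rabs w ^ 2 * / l).
  { eapply Rle_trans; [apply Rpower_1p_taylor2; exact Heps2 |]. fold C2.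
    assert (HC2 : 0 <= C2)
      by (apply Rmult_le_pos; [apply Rmult_le_pos; apply Rabs_pos | left; apply exp_pos]).
    assert (Rabs eps ^ 2 <= 36 * Rabs w ^ 2 * / l * / l).
    { pose proof (Rabs_pos eps).
      replace (36 * Rabs w ^ 2 * / l * / l) with ((6 * Rabs w * / l) ^ 2) by ring.
      apply pow_incr. lra. }
    assert (36 * Rabs w ^ 2 * / l * / l <= 36 * Rabs w ^ 2 * / l).
    { assert (0 <= 36 * Rabs w ^ 2 * / l) by (apply Rmult_le_pos; [nra | lra]). nra. }
    replace (36 * C2 * Rabs w ^ 2 * / l) with (C2 * (36 * Rabs w ^ 2 * / l)) by ring.
    apply Rmult_le_compat_l; lra. }
  assert (T2 : Rabs (a * (L1 - y) * / l) <= Rabs a * (18 * Rabs w ^ 2) * / l).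
  { rewrite Rabs_mult, (Rabs_pos_eq (/ l)) by lra. apply Rmult_le_compat_r; [lra |].
    rewrite Rabs_mult. apply Rmult_le_compat_l; [apply Rabs_pos | exact Hr2]. }
  assert (T3 : Rabs (a * th * w ^ 2 * / l) <= Rabs a * Rabs w ^ 2 * / l).
  { rewrite !Rabs_mult, (Rabs_pos_eq (/ l)), (Rabs_pos_eq th), <- RPow_abs by lra.
    apply Rmult_le_compat_r; [lra |].
    assert (0 <= Rabs a * Rabs w ^ 2) by (apply Rmult_le_pos; [apply Rabs_pos | apply pow2_ge_0]). nra. }
  pose proof (Rabs_triang (Rpower (1 + eps) a - 1 - a * eps + a * (L1 - y) * / l) (a * th * w ^ 2 * / l)).
  pose proof (Rabs_triang (Rpower (1 + eps) a - 1 - a * eps) (a * (L1 - y) * / l)).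
  unfold Rdiv. lra.
Qed.

Lemma N_expansion_eq p a x h w : -1 < w ->
  let beta := 2 * a * theta x / ell x in
  let u := h * qrate p a x - 1 in
  let P := Rpower (1 + w) p in
  let tau := P - 1 - p * w - p * (p - 1) / 2 * w ^ 2 in
  let rho := Rpower (ell x + ln (1 + theta x * (2 * w + w ^ 2))) a / Rpower (ell x) a
             - 1 - beta * w in
  h * Rpower (Rabs (w + 1)) (p - 1) * (w + 1)
    * (Rpower (ln (x ^ 2 * (w + 1) ^ 2 + 2)) a / Rpower (ell x) a)
  - h * (w + 1) - w - p * w ^ 2 / 2
  = u * w + p / 2 * (u - h * beta) * w ^ 2
    + h * (p * beta * w ^ 2 + p * (p - 1) / 2 * beta * w ^ 3 + tau * (1 + beta * w) + P * rho).
Proof.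
  intros Hw beta u P tau rho.
  rewrite (Rmult_assoc h), Rpower_abs_1p_mul, ln_rescaled_ell by exact Hw.
  pose proof (second_order_expansion h p w beta tau rho) as Hexp. cbv zeta in Hexp.
  replace (1 + p * w + p * (p - 1) / 2 * w ^ 2 + tau) with P in Hexp by (unfold tau; ring).
  unfold u, qrate. fold beta P. rewrite <- Hexp. unfold rho. ring.
Qed.

Lemma N_expansion_bound p a : 1 < p -> exists C, 0 < C /\ forall x h w,
  ell0 p a <= ell x -> 0 < h ->
  Rabs (h * qrate p a x - 1) <= Kc p a / ell x ^ 2 -> Rabs w <= 1/8 ->
  Rabs (h * Rpower (Rabs (w + 1)) (p - 1) * (w + 1)
          * (Rpower (ln (x ^ 2 * (w + 1) ^ 2 + 2)) a / Rpower (ell x) a)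
        - h * (w + 1) - w - p * w ^ 2 / 2)
  <= C * (Rabs w / ell x ^ 2 + Rabs w ^ 2 / ell x + Rabs w ^ 3).
Proof.
  intros Hp.
  set (C2 := Rabs a * Rabs (a - 1) * exp (Rabs (a - 2))).
  set (C3 := Rabs p * Rabs (p - 1) * Rabs (p - 2) * exp (Rabs (p - 3))).
  set (Q := Kc p a + 3 / (p - 1) + 2 * Rabs a + exp (Rabs p) + C3 + p
            + Rabs (p * (p - 1) / 2) + 36 * C2 + 19 * Rabs a).
  assert (HC2 : 0 <= C2)
    by (apply Rmult_le_pos; [apply Rmult_le_pos; apply Rabs_pos | left; apply exp_pos]).
  assert (HC3 : 0 <= C3)
    by (apply Rmult_le_pos; [repeat apply Rmult_le_pos; apply Rabs_pos | left; apply exp_pos]).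
  assert (Hp3 : 0 < 3 / (p - 1)) by (apply Rdiv_lt_0_compat; lra).
  pose proof (Kc_ge_1 p a Hp). pose proof (Rabs_pos a). pose proof (exp_pos (Rabs p)).
  pose proof (Rabs_pos (p * (p - 1) / 2)).
  assert (HQ : 1 <= Q) by (unfold Q; lra).
  exists (4 * Q ^ 3). split; [nra |].
  intros x h w Hell Hh Hhq Hw.
  pose proof (ell_ge_3 p a Hp x Hell).
  assert (Hil : 0 < / ell x <= 1)
    by (split; [apply Rinv_0_lt_compat; lra | rewrite <- Rinv_1; apply Rinv_le_contravar; lra]).
  rewrite N_expansion_eq by (split_Rabs; lra).
  replace (Rabs w / ell x ^ 2 + Rabs w ^ 2 / ell x + Rabs w ^ 3)
    with (Rabs w * (/ ell x) ^ 2 + Rabs w ^ 2 * / ell x + Rabs w ^ 3) by (field; lra).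
  apply expansion_remainder_bound; try lra.
  - split; [lra |]. pose proof (h_le_of_hq_bound p a Hp x Hell h Hhq). unfold Q; lra.
  - split; [lra | unfold Q; lra].
  - unfold Q; lra.
  - apply Rle_trans with (Kc p a * / ell x ^ 2); [exact Hhq |]. rewrite pow_inv.
    apply Rmult_le_compat_r; [apply Rlt_le, Rinv_0_lt_compat, pow_lt; lra | unfold Q; lra].
  - apply Rle_trans with (2 * Rabs a * / ell x); [exact (beta_bound p a Hp x Hell) |].
    apply Rmult_le_compat_r; [lra | unfold Q; lra].
  - apply Rle_trans with (C3 * Rabs w ^ 3); [exact (Rpower_1p_taylor3 p w ltac:(lra)) |].
    apply Rmult_le_compat_r; [apply pow_le, Rabs_pos | unfold Q; lra].
  - rewrite Rabs_pos_eq by (left; apply exp_pos).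
    eapply Rle_trans; [apply Rpower_1p_le; lra | unfold Q; lra].
  - eapply Rle_trans;
      [exact (Rpower_ln_ratio_expansion a (ell x) (theta x) w ltac:(lra) (theta_bounds x) Hw) |].
    fold C2. unfold Rdiv.
    apply Rmult_le_compat_r; [lra |]. apply Rmult_le_compat_r; [apply pow2_ge_0 | unfold Q; lra].
Qed.

Lemma ell_error_le_s_error W l s B : 0 <= W -> 0 < l -> 3 <= s -> s <= B * l ->
  W / l ^ 2 + W ^ 2 / l + W ^ 3 <= (B ^ 2 + B + 1) * (W * ln s / s ^ 2 + W ^ 2 / s + W ^ 3).
Proof.
  intros HW Hl Hs HsB.
  assert (HB : 0 < B) by (apply Rmult_lt_reg_r with l; nra).
  assert (Hln : 1 <= ln s).
  { rewrite <- (ln_exp 1). apply ln_le; [apply exp_pos | pose proof exp_le_3; lra]. }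
  assert (Hil : / l <= B / s).
  { apply Rmult_le_reg_r with (l * s); [nra |].
    replace (/ l * (l * s)) with s by (field; lra).
    replace (B / s * (l * s)) with (B * l) by (field; lra). lra. }
  assert (Hil0 : 0 < / l) by (apply Rinv_0_lt_compat; lra).
  assert (E1 : W / l ^ 2 <= B ^ 2 * (W * ln s / s ^ 2)).
  { replace (W / l ^ 2) with (W * (/ l) ^ 2) by (field; lra).
    replace (B ^ 2 * (W * ln s / s ^ 2)) with (W * ln s * (B / s) ^ 2) by (field; lra).
    assert ((/ l) ^ 2 <= (B / s) ^ 2) by (apply pow_incr; lra).
    assert (0 <= W * (B / s) ^ 2) by (apply Rmult_le_pos; [lra | apply pow2_ge_0]).
    nra. }
  assert (E2 : W ^ 2 / l <= B * (W ^ 2 / s)).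
  { unfold Rdiv. replace (B * (W ^ 2 * / s)) with (W ^ 2 * (B / s)) by (unfold Rdiv; ring).
    apply Rmult_le_compat_l; [apply pow2_ge_0 | lra]. }
  assert (0 <= W * ln s / s ^ 2) by (apply Rdiv_le_0_compat; nra).
  assert (0 <= W ^ 2 / s) by (apply Rdiv_le_0_compat; nra).
  assert (0 <= W ^ 3) by (apply pow_le; lra).
  assert (0 <= B ^ 2 * (W ^ 2 / s + W ^ 3)) by (apply Rmult_le_pos; nra).
  assert (0 <= B * (W * ln s / s ^ 2 + W ^ 3)) by (apply Rmult_le_pos; lra).
  nra.
Qed.

Theorem lemmaA6 (p alpha T : R) (psi : R -> R) :
  1 < p -> 0 < T -> is_blowup_sol p alpha T psi ->
  exists C delta S : R, 0 < C /\ 0 < delta /\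
    forall w s, Rabs w < delta -> S < s ->
      Rabs (Nfun p alpha T psi w s - p * w ^ 2 / 2)
        <= C * (Rabs w * ln s / s ^ 2 + Rabs w ^ 2 / s + Rabs w ^ 3).
Proof.
  intros Hp _ Hsol.
  destruct (N_expansion_bound p alpha Hp) as [C [HC HN]].
  destruct (hfun_estimates p alpha T psi Hp Hsol) as [S [HS Hh]].
  set (B := p - 1 + 2 * Rabs alpha).
  assert (HB : 0 < B) by (unfold B; pose proof (Rabs_pos alpha); lra).
  exists (C * (B ^ 2 + B + 1)), (1/8), S.
  split; [apply Rmult_lt_0_compat; nra |]. split; [lra |].
  intros w s Hw Hs.
  destruct (Hh s Hs) as (Hell & Hpos & Hhq & Hsl).
  unfold Nfun, lnpow, rpow. cbv zeta.
  eapply Rle_trans; [apply HN; auto; lra |].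
  rewrite Rmult_assoc. apply Rmult_le_compat_l; [lra |].
  pose proof (ell_ge_3 p alpha Hp _ Hell).
  apply ell_error_le_s_error; [apply Rabs_pos | lra | lra | exact Hsl].
Qed.
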